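(* Let $\Lambda$ be a row-finite, locally-convex $k$-graph, $R$ a commutative ring with $1$, $H\subseteq\Lambda^0$ a hereditary and saturated set, and $J$ the ideal of $KP_R(\Lambda)$ generated by $\{p_v: v\in H\}$. Then \[H(J^\perp)=\{v\in\Lambda^0: v\Lambda H=\emptyset\}=\Lambda^0\setminus\overline{H}(J),\] i.e. $H(J^\perp)$ consists exactly of the vertices $v$ for which there is no path $\lambda$ with $r(\lambda)=v$ and $s(\lambda)\in H$.
   Context: A $k$-graph $(\Lambda,d)$ is a countable category with a functor $d:\Lambda\to\mathbb{N}^k$ with unique factorization; vertices $\Lambda^0$ are the degree-$0$ paths, $r,s$ range and source, $e_i$ standard generators, $v\Lambda H=\{\lambda: r(\lambda)=v, s(\lambda)\in H\}$. Row-finite: finitely many paths of each degree with each range. $\Lambda^{\le n}=\{\lambda:d(\lambda)\le n,\ d(\lambda)_i<n_i\Rightarrow s(\lambda)\Lambda^{e_i}=\emptyset\}$. Locally-convex: for $i\neq j$, $\lambda\in v\Lambda^{e_i},\mu\in v\Lambda^{e_j}$, $s(\lambda)\Lambda^{e_j}\ne\emptyset\ne s(\mu)\Lambda^{e_i}$. $H$ hereditary: $r(\lambda)\in H\Rightarrow s(\lambda)\in H$; saturated: $s(v\Lambda^{\le e_i})\subseteq H$ for some $i$ implies $v\in H$. $KP_R(\Lambda)$ is the universal $R$-algebra generated by $p_v$, $s_\lambda,s_{\lambda^*}$ with relations (KP1) $p_v$ mutually orthogonal idempotents; (KP2) $s_\lambda s_\mu=s_{\lambda\mu}$, $s_{\mu^*}s_{\lambda^*}=s_{(\lambda\mu)^*}$,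 $p_{r(\lambda)}s_\lambda=s_\lambda=s_\lambda p_{s(\lambda)}$, $p_{s(\lambda)}s_{\lambda^*}=s_{\lambda^*}=s_{\lambda^*}p_{r(\lambda)}$; (KP3) $s_{\lambda^*}s_\mu=\delta_{\lambda,\mu}p_{s(\lambda)}$ for $\lambda,\mu\in\Lambda^{\le n}$, $n\ne0$; (KP4) $p_v=\sum_{\lambda\in v\Lambda^{\le n}}s_\lambda s_{\lambda^*}$, $n\ne0$. For an ideal $I$: $H(I)=\{v:p_v\in I\}$, $\overline{H}(I)=\{r(\lambda):\lambda\in\Lambda,\ s(\lambda)\in H(I)\}$, and $I^\perp=\{a: ax=xa=0\ \forall x\in I\}$. *)

From HB Require Import structures.
From mathcomp Require Import all_boot all_order all_algebra.
Set Implicit Arguments. Unset Strict Implicit. Unset Printing Implicit Defensive.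
Import GRing.Theory.
Local Open Scope ring_scope.

(* A k-graph: a countable category (objects = vertices, morphisms = paths)
   with a degree functor d : Lambda -> N^k satisfying unique factorisation.
   Composition [kcomp l m] (= l m) is only meaningful when [src l = rng m]. *)
Record kgraph (k : nat) := KGraph {
  vert : countType;
  kpath : countType;
  rng : kpath -> vert;
  src : kpath -> vert;
  idp : vert -> kpath;
  kcomp : kpath -> kpath -> kpath;
  deg : kpath -> 'I_k -> nat;
  rng_idp : forall v, rng (idp v) = v;
  src_idp : forall v, src (idp v) = v;
  rng_comp : forall l m, src l = rng m -> rng (kcomp l m) = rng l;
  src_comp : forall l m, src l = rng m -> src (kcomp l m) = src m;
  comp_idl : forall l, kcomp (idp (rng l)) l = l;
  comp_idr : forall l, kcomp l (idp (src l)) = l;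
  compA : forall l m n, src l = rng m -> src m = rng n ->
     kcomp l (kcomp m n) = kcomp (kcomp l m) n;
  deg_idp : forall v i, deg (idp v) i = 0%N;
  deg_comp : forall l m, src l = rng m ->
     forall i, deg (kcomp l m) i = (deg l i + deg m i)%N;
  factorisation : forall l (m n : 'I_k -> nat),
     (forall i, deg l i = (m i + n i)%N) ->
     exists mu nu, [/\ src mu = rng nu, kcomp mu nu = l,
                       forall i, deg mu i = m i & forall i, deg nu i = n i];
  factorisation_uniq : forall mu nu mu' nu',
     src mu = rng nu -> src mu' = rng nu' -> kcomp mu nu = kcomp mu' nu' ->
     (forall i, deg mu i = deg mu' i) -> mu = mu' /\ nu = nu'
}.

Section KGraphDefs.
Variables (k : nat) (L : kgraph k).

Definition e_ (i : 'I_k) : 'I_k -> nat := fun j => nat_of_bool (j == i).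

Definition has_path_deg (v : vert L) (n : 'I_k -> nat) : Prop :=
  exists l : kpath L, rng l = v /\ forall j, deg l j = n j.

Definition in_le (n : 'I_k -> nat) (l : kpath L) : Prop :=
  (forall i, deg l i <= n i)%N /\
  (forall i, (deg l i < n i)%N -> ~ has_path_deg (src l) (e_ i)).

Definition row_finite : Prop :=
  forall (v : vert L) (n : 'I_k -> nat), exists s : seq (kpath L),
    forall l, rng l = v -> (forall j, deg l j = n j) -> l \in s.

Definition locally_convex : Prop :=
  forall (i j : 'I_k) (l m : kpath L), i != j -> rng l = rng m ->
    (forall t, deg l t = e_ i t) -> (forall t, deg m t = e_ j t) ->
    has_path_deg (src l) (e_ j) /\ has_path_deg (src m) (e_ i).

Definition hereditary (H : vert L -> Prop) : Prop :=
  forall l : kpath L, H (rng l) -> H (src l).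

Definition saturated (H : vert L -> Prop) : Prop :=
  forall v : vert L,
    (exists i : 'I_k, forall l, rng l = v -> in_le (e_ i) l -> H (src l)) -> H v.

Definition nonzero_deg (n : 'I_k -> nat) : Prop := exists i, n i <> 0%N.

End KGraphDefs.

Record nualg (R : comNzRingType) := NUAlg {
  nua_car :> lmodType R;
  nua_mul : nua_car -> nua_car -> nua_car;
  nua_mulA : forall a b c, nua_mul a (nua_mul b c) = nua_mul (nua_mul a b) c;
  nua_mulDl : forall a b c, nua_mul (a + b) c = nua_mul a c + nua_mul b c;
  nua_mulDr : forall a b c, nua_mul a (b + c) = nua_mul a b + nua_mul a c;
  nua_scalerAl : forall (r : R) a b, nua_mul (r *: a) b = r *: nua_mul a b;
  nua_scalerAr : forall (r : R) a b, nua_mul a (r *: b) = r *: nua_mul a b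
}.

Definition nua_hom (R : comNzRingType) (A B : nualg R) (f : A -> B) : Prop :=
  [/\ forall a b, f (a + b) = f a + f b,
      forall (r : R) a, f (r *: a) = r *: f a &
      forall a b, f (nua_mul a b) = nua_mul (f a) (f b)].

Record kpdata (k : nat) (L : kgraph k) (R : comNzRingType) (A : nualg R) := KPData {
  kp_p : vert L -> A;
  kp_s : kpath L -> A;
  kp_ss : kpath L -> A
}.

Section KP.
Variables (k : nat) (L : kgraph k) (R : comNzRingType).

Definition is_KP_family (A : nualg R) (F : kpdata L A) : Prop :=
  let p := kp_p F in let s := kp_s F in let ss := kp_ss F in
  let mul := @nua_mul R A in
  (forall v, mul (p v) (p v) = p v) /\
  (forall v w, v != w -> mul (p v) (p w) = 0) /\
  (forall l m, src l = rng m ->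
     mul (s l) (s m) = s (kcomp l m) /\ mul (ss m) (ss l) = ss (kcomp l m)) /\
  (forall l, mul (p (rng l)) (s l) = s l /\ mul (s l) (p (src l)) = s l /\
             mul (p (src l)) (ss l) = ss l /\ mul (ss l) (p (rng l)) = ss l) /\
  (forall (n : 'I_k -> nat) l m, nonzero_deg n -> in_le n l -> in_le n m ->
     mul (ss l) (s m) = if l == m then p (src l) else 0) /\
  (forall (v : vert L) (n : 'I_k -> nat) (es : seq (kpath L)), nonzero_deg n ->
     uniq es -> (forall l, l \in es <-> (rng l = v /\ in_le n l)) ->
     p v = \sum_(l <- es) mul (s l) (ss l)).

Definition is_KP_algebra (A : nualg R) (F : kpdata L A) : Prop :=
  is_KP_family F /\
  forall (B : nualg R) (G : kpdata L B), is_KP_family G ->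
    (exists f : A -> B, nua_hom f /\
        (forall v, f (kp_p F v) = kp_p G v) /\
        (forall l, f (kp_s F l) = kp_s G l) /\
        (forall l, f (kp_ss F l) = kp_ss G l)) /\
    (forall f g : A -> B, nua_hom f -> nua_hom g ->
        (forall v, f (kp_p F v) = g (kp_p F v)) ->
        (forall l, f (kp_s F l) = g (kp_s F l)) ->
        (forall l, f (kp_ss F l) = g (kp_ss F l)) ->
        forall a, f a = g a).

End KP.

Section Ideals.
Variables (R : comNzRingType) (A : nualg R).

Definition is_ideal (I : A -> Prop) : Prop :=
  [/\ I 0, forall a b, I a -> I b -> I (a + b),
      forall (r : R) a, I a -> I (r *: a) &
      forall a x, I x -> I (nua_mul a x) /\ I (nua_mul x a)].

Definition gen_ideal (S : A -> Prop) : A -> Prop :=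
  fun x => forall I, is_ideal I -> (forall y, S y -> I y) -> I x.

Definition perp (I : A -> Prop) : A -> Prop :=
  fun a => forall x, I x -> nua_mul a x = 0 /\ nua_mul x a = 0.

End Ideals.

Section HI.
Variables (k : nat) (L : kgraph k) (R : comNzRingType) (A : nualg R) (F : kpdata L A).

Definition HofI (I : A -> Prop) : vert L -> Prop := fun v => I (kp_p F v).

Definition HbarofI (I : A -> Prop) : vert L -> Prop :=
  fun v => exists l : kpath L, rng l = v /\ HofI I (src l).

Definition ideal_of_vertices (H : vert L -> Prop) : A -> Prop :=
  gen_ideal (fun x => exists v, H v /\ x = kp_p F v).

End HI.

From Pilot Require Import Defs.
From HB Require Import structures.
From mathcomp Require Import all_boot all_order all_algebra.
From mathcomp Require Import boolp functions zify.
Set Implicit Arguments. Unset Strict Implicit. Unset Printing Implicit Defensive.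
Import GRing.Theory.
Local Open Scope ring_scope.

(* Two facts
   drive the proof.
   (a) H(J) = H.  Points of a representation are the boundary paths that
       avoid H (increasing sequences of paths x_N in L^{<=(N,...,N)} with
       sources outside H); p_v, s_l, s_l^* act on functions of such points
       by pullback along "range is v", "strip l" and "prepend l".  This KP
       family kills p_w for w in H but no p_u with u outside H (saturation
       gives boundary paths at u), so by universality p_u is not in J.
       Taking H empty shows that no p_u vanishes.
   (b) Corner vanishing.  If no paths from v and from w share their source,
       then p_v a p_w = 0 for all a.  It suffices to check this on a
       spanning set: KP_R(L) is spanned by the s_a s_b^* with s(a) = s(b)
       (from KP3, KP4 and local convexity) or, for k = 0, by its corners.
   If v L H is empty, (b) says that the idempotent p_v annihilates every
   generator p_w of J on both sides, hence all of J.  If r(l) = v and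
   s(l) is in H, then s_l is in J, so p_v in J^perp gives s_l = p_v s_l = 0
   and p_{s(l)} = s_l^* s_l = 0, contradicting (a).  The second equality
   of the theorem is a restatement of (a). *)

Record submod_pred (R : comNzRingType) (V : lmodType R) := SubmodPred {
  submod_mem :> V -> Prop;
  submod_mem0 : submod_mem 0;
  submod_memD : forall a b, submod_mem a -> submod_mem b -> submod_mem (a + b);
  submod_memZ : forall (r : R) a, submod_mem a -> submod_mem (r *: a) }.

Section Submodule.
Variables (R : comNzRingType) (V : lmodType R) (S : submod_pred V).

Definition submod_predb : {pred V} := fun x => `[< S x >].
Record submod := Submod { submod_val : V; submod_valP : submod_predb submod_val }.
HB.instance Definition _ := [isSub for submod_val].
HB.instance Definition _ := [Choice of submod by <:].

Lemma submod_predb_closed : subsemimod_closed submod_predb.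
Proof.
split; [split|].
- by apply/asboolP; apply: submod_mem0.
- by move=> a b /asboolP Ha /asboolP Hb; apply/asboolP; apply: submod_memD.
- by move=> r a /asboolP Ha; apply/asboolP; apply: submod_memZ.
Qed.
HB.instance Definition _ :=
  GRing.SubChoice_isSubLmodule.Build R V submod_predb submod submod_predb_closed.

Lemma submod_valD (a b : submod) : submod_val (a + b) = submod_val a + submod_val b.
Proof. by []. Qed.

Lemma submod_valZ r (a : submod) : submod_val (r *: a) = r *: submod_val a.
Proof. by []. Qed.

Lemma submod_val_sum (I : Type) (r : seq I) (f : I -> submod) :
  submod_val (\sum_(i <- r) f i) = \sum_(i <- r) submod_val (f i).
Proof.
elim: r => [|x r IH]; first by rewrite !big_nil.
by rewrite !big_cons submod_valD IH.
Qed.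

Lemma submod_S (x : submod) : S (submod_val x).
Proof. by case: x => a Ha; apply/asboolP. Qed.

Lemma submod_val_inj (x y : submod) : submod_val x = submod_val y -> x = y.
Proof. exact: val_inj. Qed.

Definition submod_mk (a : V) (h : S a) : submod := Submod (asboolT h).

End Submodule.

Section Subalgebra.
Variables (R : comNzRingType) (A : nualg R) (S : submod_pred A).
Hypothesis S_mul : forall a b, S a -> S b -> S (nua_mul a b).
Local Notation C := (submod S).

Definition submod_mul (x y : C) : C :=
  submod_mk (S_mul (submod_S x) (submod_S y)).

Lemma submod_mulE x y :
  submod_val (submod_mul x y) = nua_mul (submod_val x) (submod_val y).
Proof. by []. Qed.

Lemma submod_mulA a b c : submod_mul a (submod_mul b c) = submod_mul (submod_mul a b) c.
Proof. by apply: submod_val_inj; rewrite !submod_mulE nua_mulA. Qed.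
Lemma submod_mulDl a b c : submod_mul (a + b) c = submod_mul a c + submod_mul b c.
Proof. by apply: submod_val_inj; rewrite !(submod_mulE, submod_valD) nua_mulDl. Qed.
Lemma submod_mulDr a b c : submod_mul a (b + c) = submod_mul a b + submod_mul a c.
Proof. by apply: submod_val_inj; rewrite !(submod_mulE, submod_valD) nua_mulDr. Qed.
Lemma submod_mulZl (r : R) a b : submod_mul (r *: a) b = r *: submod_mul a b.
Proof. by apply: submod_val_inj; rewrite !(submod_mulE, submod_valZ) nua_scalerAl. Qed.
Lemma submod_mulZr (r : R) a b : submod_mul a (r *: b) = r *: submod_mul a b.
Proof. by apply: submod_val_inj; rewrite !(submod_mulE, submod_valZ) nua_scalerAr. Qed.

Definition subalgebra : nualg R :=
  NUAlg submod_mulA submod_mulDl submod_mulDr submod_mulZl submod_mulZr.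
End Subalgebra.

(* Proof:
   the property cuts out a subalgebra carrying a KP family; the universal
   map into it, followed by the inclusion, is the identity by uniqueness. *)
Lemma KP_algebra_ind (k : nat) (L : kgraph k) (R : comNzRingType) (A : nualg R)
    (F : kpdata L A) (P : A -> Prop) :
  is_KP_algebra F ->
  P 0 -> (forall a b, P a -> P b -> P (a + b)) ->
  (forall (r : R) a, P a -> P (r *: a)) ->
  (forall a b, P a -> P b -> P (nua_mul a b)) ->
  (forall v, P (kp_p F v)) -> (forall l, P (kp_s F l)) -> (forall l, P (kp_ss F l)) ->
  forall a, P a.
Proof.
move=> [HF Huniv] P0 PD PZ PM Pp Ps Pss a.
pose S := SubmodPred P0 PD PZ.
pose C := subalgebra (S:=S) PM.
pose G : kpdata L C := @KPData k L R C (fun v => submod_mk (S:=S) (Pp v))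
   (fun l => submod_mk (S:=S) (Ps l)) (fun l => submod_mk (S:=S) (Pss l)).
have HG : is_KP_family G.
  case: HF => [K1 [K1' [K2 [K2' [K3 K4]]]]].
  split; [|split; [|split; [|split; [|split]]]].
  - by move=> v; apply: submod_val_inj; rewrite submod_mulE /= K1.
  - by move=> v w vw; apply: submod_val_inj; rewrite submod_mulE /= K1'.
  - move=> l m lm; have [e1 e2] := K2 l m lm.
    by split; apply: submod_val_inj; rewrite submod_mulE /= ?e1 ?e2.
  - move=> l; have [e1 [e2 [e3 e4]]] := K2' l.
    by split; [|split; [|split]]; apply: submod_val_inj; rewrite submod_mulE /= ?e1 ?e2 ?e3 ?e4.
  - move=> n l m nz hl hm; apply: submod_val_inj.
    by rewrite submod_mulE /= (K3 n l m nz hl hm); case: (l == m).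
  - move=> v n es nz ues hes; apply: submod_val_inj.
    by rewrite submod_val_sum /= (K4 v n es nz ues hes); apply: eq_bigr.
have [[h [[h1 h2 h3] [hp [hs hss]]]] _] := Huniv C G HG.
have Hg : nua_hom (fun a : A => submod_val (h a)).
  by split => [b c|r b|b c]; rewrite ?h1 ?h2 ?h3.
have Hid : nua_hom (fun a : A => a) by [].
have [_ U] := Huniv A F HF.
have -> : a = submod_val (h a).
  by apply: (U _ _ Hid Hg) => [v|l|l]; rewrite ?hp ?hs ?hss.
exact: (@submod_S R A S (h a)).
Qed.

(* [Defs.compA] is shadowed by the function-composition lemma of ssrfun. *)
Definition kcompA := @Defs.compA.

Section PathOrder.
Variables (k : nat) (L : kgraph k).
Implicit Types (l a b c : kpath L) (v w : vert L) (n p q : 'I_k -> nat).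

Definition kprefix a b := exists c, src a = rng c /\ kcomp a c = b.

Definition deg_le p q := forall i, (p i <= q i)%N.

Lemma deg0_id l : (forall i, deg l i = 0%N) -> l = idp (rng l).
Proof.
move=> h.
have [] := @factorisation_uniq _ L l (idp (src l)) (idp (rng l)) l.
- by rewrite rng_idp.
- by rewrite src_idp.
- by rewrite comp_idl comp_idr.
- by move=> i; rewrite h deg_idp.
by [].
Qed.

Lemma deg0_rs l : (forall i, deg l i = 0%N) -> src l = rng l.
Proof. by move=> h; rewrite (deg0_id h) src_idp rng_idp. Qed.

Lemma deg0P l : ~ nonzero_deg (deg l) -> forall i, deg l i = 0%N.
Proof. by move=> z i; case: (deg l i =P 0%N) => // h; case: z; exists i. Qed.

Lemma kcomp_cancel a b b' :
  src a = rng b -> src a = rng b' -> kcomp a b = kcomp a b' -> b = b'.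
Proof. by move=> h1 h2 e; have [] := factorisation_uniq h1 h2 e (fun i => erefl). Qed.

Lemma kprefix_refl a : kprefix a a.
Proof. by exists (idp (src a)); rewrite rng_idp comp_idr. Qed.

Lemma kprefix_trans a b c : kprefix a b -> kprefix b c -> kprefix a c.
Proof.
move=> [x [hx <-]] [y [hy <-]].
have hy' : src x = rng y by rewrite -hy src_comp.
exists (kcomp x y); rewrite rng_comp //; split => //.
by rewrite kcompA.
Qed.

Lemma kprefix_rng a b : kprefix a b -> rng b = rng a.
Proof. by move=> [c [hc <-]]; rewrite rng_comp. Qed.

Lemma kprefix_deg a b : kprefix a b -> deg_le (deg a) (deg b).
Proof. by move=> [c [hc <-]] i; rewrite deg_comp // leq_addr. Qed.

Lemma kprefix_comp a b : src a = rng b -> kprefix a (kcomp a b).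
Proof. by move=> h; exists b. Qed.

Lemma kprefix_compl a b b' : src a = rng b -> src a = rng b' -> kprefix b b' ->
  kprefix (kcomp a b) (kcomp a b').
Proof.
move=> h h' [c [hc <-]]; exists c; split; first by rewrite src_comp.
by rewrite kcompA.
Qed.

Lemma kprefix_cancel l a b : src l = rng a -> src l = rng b ->
  kprefix (kcomp l a) (kcomp l b) -> kprefix a b.
Proof.
move=> ha hb [c [hc e]].
rewrite src_comp // in hc.
exists c; split => //.
apply: (@kcomp_cancel l); [by rewrite rng_comp | exact: hb | by rewrite kcompA].
Qed.

Lemma deg_split (d m : 'I_k -> nat) :
  deg_le m d -> forall j, d j = (m j + (d j - m j))%N.
Proof. by move=> h j; rewrite subnKC. Qed.

Lemma e_ii (i : 'I_k) : e_ i i = 1%N.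
Proof. by rewrite /e_ eqxx. Qed.

Lemma e_ij (i j : 'I_k) : j != i -> e_ i j = 0%N.
Proof. by rewrite /e_ => /negbTE ->. Qed.

Lemma e_le (d : 'I_k -> nat) (i : 'I_k) : (0 < d i)%N -> deg_le (e_ i) d.
Proof. by move=> h j; rewrite /e_; case: eqP => // ->. Qed.

Lemma sum_e (i : 'I_k) : (\sum_j e_ i j = 1)%N.
Proof. by rewrite (bigD1 i) //= e_ii big1 // => j ji; rewrite e_ij. Qed.

Lemma edge_of_deg l (i : 'I_k) : (0 < deg l i)%N -> has_path_deg (rng l) (e_ i).
Proof.
move=> hp.
have [mu [nu [h1 h2 h3 h4]]] := factorisation (deg_split (e_le hp)).
by exists mu; split; first by rewrite -h2 rng_comp.
Qed.

Lemma noedge_deg0 l (i : 'I_k) : ~ has_path_deg (rng l) (e_ i) -> deg l i = 0%N.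
Proof. by move=> h; case: (posnP (deg l i)) => // /edge_of_deg. Qed.

Lemma in_le_ext n n' l : (forall i, n i = n' i) -> in_le n l -> in_le n' l.
Proof. by move=> e [h1 h2]; split => i; rewrite -e; [apply: h1|apply: h2]. Qed.

Lemma in_le_self l : in_le (deg l) l.
Proof. by split => // i; rewrite ltnn. Qed.

Lemma in_le_id v n :
  ~ (exists i, (0 < n i)%N /\ has_path_deg v (e_ i)) -> in_le n (idp v).
Proof.
move=> h; split; first by move=> i; rewrite deg_idp.
by move=> i; rewrite deg_idp src_idp => hi he; apply: h; exists i.
Qed.

Lemma kprefix_deg_formula n a b : in_le n a -> kprefix a b ->
  forall i, deg a i = minn (n i) (deg b i).
Proof.
move=> [hle hsrc] [c [hc <-]] i.
rewrite deg_comp //.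
case: (ltnP (deg a i) (n i)) => h.
  have -> : deg c i = 0%N by apply: noedge_deg0; rewrite -hc; apply: hsrc.
  by rewrite addn0; apply/esym/minn_idPr/ltnW.
have e : deg a i = n i by apply/eqP; rewrite eqn_leq hle.
by rewrite e; apply/esym/minn_idPl; rewrite leq_addr.
Qed.

Lemma kprefix_of_deg a b (m : kpath L) :
  kprefix a m -> kprefix b m -> deg_le (deg a) (deg b) -> kprefix a b.
Proof.
move=> [c [hc ec]] [d [hd ed]] hle.
have hc' : deg_le (fun i => deg b i - deg a i)%N (deg c).
  move=> i; have := kprefix_deg (kprefix_comp hd) i; rewrite ed -ec deg_comp //.
  by rewrite leq_subLR.
have [c1 [c2 [h1 h2 h3 h4]]] := factorisation (deg_split hc').
have hac1 : src a = rng c1 by rewrite hc -h2 rng_comp.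
have e : kcomp b d = kcomp (kcomp a c1) c2 by rewrite ed -ec -h2 kcompA.
have [-> _] := factorisation_uniq hd (etrans (src_comp hac1) h1) e
   (fun i => ltac:(rewrite deg_comp // h3 subnKC //)).
by exists c1.
Qed.

Lemma kprefix_uniq n a b (m : kpath L) :
  in_le n a -> in_le n b -> kprefix a m -> kprefix b m -> a = b.
Proof.
move=> ha hb pa pb.
have dd : forall i, deg a i = deg b i.
  by move=> i; rewrite (kprefix_deg_formula ha pa) (kprefix_deg_formula hb pb).
have [c [hc ec]] := kprefix_of_deg pa pb (fun i => ltac:(rewrite dd //)).
have c0 : forall i, deg c i = 0%N.
  move=> i; apply/eqP; rewrite -(eqn_add2l (deg a i)) addn0.
  by rewrite -deg_comp // ec dd.
by rewrite -ec (deg0_id c0) -hc comp_idr.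
Qed.

Lemma in_le_comp p q a b : in_le p a -> in_le q b -> src a = rng b ->
  in_le (fun i => p i + q i)%N (kcomp a b).
Proof.
move=> [ha1 ha2] [hb1 hb2] hab; split.
  by move=> i; rewrite deg_comp // leq_add.
move=> i; rewrite deg_comp // src_comp // => hlt.
case: (ltnP (deg b i) (q i)) => hb; first exact: hb2.
have hai : (deg a i < p i)%N by lia.
move=> [e [re de]].
apply: (ha2 i hai).
have := @edge_of_deg (kcomp b e) i; rewrite rng_comp // -hab; apply.
by rewrite deg_comp // de e_ii addn1.
Qed.

Lemma in_le_rem (m : 'I_k -> nat) a c : in_le m (kcomp a c) -> src a = rng c ->
  deg_le (deg a) m -> in_le (fun i => m i - deg a i)%N c.
Proof.
move=> [h1 h2] hac hd; split.
  by move=> i; have := h1 i; have := hd i; rewrite deg_comp //; lia.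
move=> i hi; rewrite -(src_comp hac); apply: h2.
by have := hd i; rewrite deg_comp //; lia.
Qed.

End PathOrder.

Section LocalConvexity.
Variables (k : nat) (L : kgraph k).
Hypothesis LC : locally_convex L.

(* Local convexity propagated along paths: if r(l) emits an edge of colour i
   and l has no i-component, then s(l) emits an edge of colour i.  Induction
   on |d(l)|, peeling off one edge at a time. *)
Lemma push_edge (l : kpath L) (i : 'I_k) :
  has_path_deg (rng l) (e_ i) -> deg l i = 0%N -> has_path_deg (src l) (e_ i).
Proof.
move: {2}(\sum_j deg l j)%N (leqnn (\sum_j deg l j)%N) => N.
elim: N l => [|N IH] l hN he hi.
  have h0 : forall j, deg l j = 0%N.
    move=> j; apply/eqP; rewrite -leqn0; apply: leq_trans hN.
    by rewrite (bigD1 j) //= leq_addr.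
  by rewrite (deg0_rs h0).
case: (boolP [exists j, 0 < deg l j]%N) => [/existsP [j hj]|hno]; last first.
  have h0 : forall j, deg l j = 0%N.
    move=> j; apply/eqP; rewrite -leqn0 leqNgt; apply/negP => hj.
    by move/existsP: hno; apply; exists j.
  by rewrite (deg0_rs h0).
have [f [nu [h1 h2 h3 h4]]] := factorisation (deg_split (e_le hj)).
have ji : i != j by apply/eqP => eij; move: hj; rewrite -eij hi.
case: he => e [re de].
have rf : rng f = rng l by rewrite -h2 rng_comp.
have [_ hs] := LC ji (etrans re (esym rf)) de h3.
have -> : src l = src nu by rewrite -h2 src_comp.
apply: IH.
- have dl : (\sum_t deg l t = \sum_t deg f t + \sum_t deg nu t)%N.
    by rewrite -big_split /=; apply: eq_bigr => t _; rewrite -h2 deg_comp.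
  have df : (\sum_t deg f t = 1)%N by rewrite -(sum_e j); apply: eq_bigr => t _.
  by move: hN; rewrite dl df add1n ltnS.
- by rewrite -h1.
- by rewrite h4 hi e_ij.
Qed.

Lemma truncate (m n : 'I_k -> nat) (b : kpath L) :
  in_le m b -> deg_le n m -> exists a, in_le n a /\ kprefix a b.
Proof.
move=> [hb1 hb2] hnm.
have hd : deg_le (fun i => minn (n i) (deg b i)) (deg b) by move=> i; rewrite geq_minr.
have [a [c [h1 h2 h3 h4]]] := factorisation (deg_split hd).
exists a; split; last by exists c.
split; first by move=> i; rewrite h3 geq_minl.
move=> i; rewrite h3 => hi he.
have hbi : (deg b i < n i)%N by move: hi; lia.
have c0 : deg c i = 0%N by rewrite h4; lia.
have := push_edge (l:=c) (i:=i); rewrite -h1 => /(_ he c0).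
rewrite -(src_comp h1) h2; apply: hb2; exact: (leq_trans hbi (hnm i)).
Qed.

End LocalConvexity.

(* Row-finiteness makes every v L^{<=n} finite: it is contained in the union
   of the finitely many v L^m with m <= n. *)
Lemma enum_le (k : nat) (L : kgraph k) (v : vert L) (n : 'I_k -> nat) :
  row_finite L ->
  exists es : seq (kpath L), uniq es /\ forall l, l \in es <-> (rng l = v /\ in_le n l).
Proof.
move=> RF; pose N := (\sum_i n i).+1.
pose pick (f : {ffun 'I_k -> 'I_N}) := projT1 (cid (RF v (fun i => nat_of_ord (f i)))).
have pickP : forall (f : {ffun 'I_k -> 'I_N}) l,
    rng l = v -> (forall j, deg l j = f j) -> l \in pick f.
  by move=> f; rewrite /pick; exact: (projT2 (cid (RF v (fun i => nat_of_ord (f i))))).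
pose cands := flatten [seq pick f | f <- enum {ffun 'I_k -> 'I_N}].
exists (undup [seq l <- cands | `[< rng l = v /\ in_le n l >]]).
split; first exact: undup_uniq.
move=> l; rewrite mem_undup mem_filter; split; first by move=> /andP [/asboolP h _].
move=> h; apply/andP; split; first exact/asboolP.
have hlt : forall i, (deg l i < N)%N.
  move=> i; rewrite /N ltnS; apply: leq_trans (proj1 h.2 i) _.
  by rewrite (bigD1 i) //= leq_addr.
apply/flatten_mapP; exists [ffun i => Ordinal (hlt i)]; first by rewrite mem_enum.
by apply: pickP; [exact: h.1 | move=> j; rewrite ffunE].
Qed.

Section NUAlgebra.
Variables (R : comNzRingType) (A : nualg R).
Local Notation mul := (@nua_mul R A).

Lemma nua_mul0l (c : A) : mul 0 c = 0.
Proof.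
have := nua_mulDl 0 0 c; rewrite addr0 => e.
by apply: (addrI (mul 0 c)); rewrite addr0 -e.
Qed.

Lemma nua_mul0r (c : A) : mul c 0 = 0.
Proof.
have := nua_mulDr c 0 0; rewrite addr0 => e.
by apply: (addrI (mul c 0)); rewrite addr0 -e.
Qed.

Lemma nua_mul_suml (I : Type) (r : seq I) (f : I -> A) c :
  mul (\sum_(i <- r) f i) c = \sum_(i <- r) mul (f i) c.
Proof.
elim: r => [|x r IH]; first by rewrite !big_nil nua_mul0l.
by rewrite !big_cons nua_mulDl IH.
Qed.

Lemma nua_mul_sumr (I : Type) (r : seq I) (f : I -> A) c :
  mul c (\sum_(i <- r) f i) = \sum_(i <- r) mul c (f i).
Proof.
elim: r => [|x r IH]; first by rewrite !big_nil nua_mul0r.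
by rewrite !big_cons nua_mulDr IH.
Qed.

End NUAlgebra.

Section KPRelations.
Variables (k : nat) (L : kgraph k) (R : comNzRingType) (A : nualg R) (F : kpdata L A).
Hypothesis HF : is_KP_family F.
Local Notation mul := (@nua_mul R A).
Local Notation p := (kp_p F).
Local Notation s := (kp_s F).
Local Notation ss := (kp_ss F).

Lemma KPpp v : mul (p v) (p v) = p v.
Proof. by have [K1 [K1' [K2 [K2' [K3 K4]]]]] := HF. Qed.
Lemma KPpq v w : v != w -> mul (p v) (p w) = 0.
Proof. by have [K1 [K1' [K2 [K2' [K3 K4]]]]] := HF; apply: K1'. Qed.
Lemma KPss l m : src l = rng m -> mul (s l) (s m) = s (kcomp l m).
Proof. by have [K1 [K1' [K2 [K2' [K3 K4]]]]] := HF => /K2 []. Qed.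
Lemma KPstst l m : src l = rng m -> mul (ss m) (ss l) = ss (kcomp l m).
Proof. by have [K1 [K1' [K2 [K2' [K3 K4]]]]] := HF => /K2 []. Qed.
Lemma KPps l : mul (p (rng l)) (s l) = s l.
Proof. by have [K1 [K1' [K2 [K2' [K3 K4]]]]] := HF; case: (K2' l). Qed.
Lemma KPsp l : mul (s l) (p (src l)) = s l.
Proof. by have [K1 [K1' [K2 [K2' [K3 K4]]]]] := HF; case: (K2' l) => _ []. Qed.
Lemma KPpst l : mul (p (src l)) (ss l) = ss l.
Proof. by have [K1 [K1' [K2 [K2' [K3 K4]]]]] := HF; case: (K2' l) => _ [_ []]. Qed.
Lemma KPstp l : mul (ss l) (p (rng l)) = ss l.
Proof. by have [K1 [K1' [K2 [K2' [K3 K4]]]]] := HF; case: (K2' l) => _ [_ []]. Qed.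
Lemma KP3 (n : 'I_k -> nat) l m : nonzero_deg n -> in_le n l -> in_le n m ->
  mul (ss l) (s m) = if l == m then p (src l) else 0.
Proof. by have [K1 [K1' [K2 [K2' [K3 K4]]]]] := HF; apply: K3. Qed.
Lemma KP4 v (n : 'I_k -> nat) (es : seq (kpath L)) : nonzero_deg n ->
  uniq es -> (forall l, l \in es <-> (rng l = v /\ in_le n l)) ->
  p v = \sum_(l <- es) mul (s l) (ss l).
Proof. by have [K1 [K1' [K2 [K2' [K3 K4]]]]] := HF; apply: K4. Qed.

Lemma KPps0 w l : w != rng l -> mul (p w) (s l) = 0.
Proof. by move=> h; rewrite -KPps nua_mulA KPpq // nua_mul0l. Qed.
Lemma KPpst0 w l : w != src l -> mul (p w) (ss l) = 0.
Proof. by move=> h; rewrite -KPpst nua_mulA KPpq // nua_mul0l. Qed.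
Lemma KPstp0 w l : rng l != w -> mul (ss l) (p w) = 0.
Proof. by move=> h; rewrite -KPstp -nua_mulA KPpq // nua_mul0r. Qed.
Lemma KPss0 l m : src l != rng m -> mul (s l) (s m) = 0.
Proof. by move=> h; rewrite -KPsp -nua_mulA KPps0 // nua_mul0r. Qed.
Lemma KPstst0 l m : src l != rng m -> mul (ss m) (ss l) = 0.
Proof. by move=> h; rewrite -KPstp -nua_mulA KPpst0 1?eq_sym // nua_mul0r. Qed.
Lemma KPsts0 l m : rng l != rng m -> mul (ss l) (s m) = 0.
Proof. by move=> h; rewrite -KPstp -nua_mulA KPps0 // nua_mul0r. Qed.

End KPRelations.

Section Span.
Variables (k : nat) (L : kgraph k) (R : comNzRingType) (A : nualg R) (F : kpdata L A).
Hypothesis HF : is_KP_family F.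
Hypothesis RF : row_finite L.
Hypothesis LC : locally_convex L.
Hypothesis k_gt0 : (0 < k)%N.
Local Notation mul := (@nua_mul R A).
Local Notation p := (kp_p F).
Local Notation s := (kp_s F).
Local Notation ss := (kp_ss F).

Lemma p_expand v : exists es : seq (kpath L),
  (forall l, l \in es -> rng l = v) /\ p v = \sum_(l <- es) mul (s l) (ss l).
Proof.
have [es [ues hes]] := enum_le v (fun _ => 1%N) RF.
exists es; split; first by move=> l /hes [].
by apply: (KP4 HF _ ues hes); exists (Ordinal k_gt0).
Qed.

Lemma s_idp v : s (idp v) = p v.
Proof.
have [es [hr e]] := p_expand v.
rewrite -(KPsp HF (idp v)) src_idp e nua_mul_sumr.
apply: eq_big_seq => l /hr hl.
rewrite nua_mulA KPss ?src_idp ?hl //.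
by have := comp_idl l; rewrite hl => ->.
Qed.

Lemma ss_idp v : ss (idp v) = p v.
Proof.
have [es [hr e]] := p_expand v.
rewrite -(KPpst HF (idp v)) src_idp e nua_mul_suml.
apply: eq_big_seq => l /hr hl.
rewrite -nua_mulA KPstst ?src_idp ?hl //.
by have := comp_idl l; rewrite hl => ->.
Qed.

Inductive kp_span : A -> Prop :=
 | span0 : kp_span 0
 | spanD a b : kp_span a -> kp_span b -> kp_span (a + b)
 | spanZ (r : R) a : kp_span a -> kp_span (r *: a)
 | span_gen a b : src a = src b -> kp_span (mul (s a) (ss b)).

Lemma span_sum (I : eqType) (r : seq I) (f : I -> A) :
  (forall i, i \in r -> kp_span (f i)) -> kp_span (\sum_(i <- r) f i).
Proof.
elim: r => [|x r IH] h; first by rewrite big_nil; apply: span0.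
rewrite big_cons; apply: spanD; first by apply: h; rewrite mem_head.
by apply: IH => i hi; apply: h; rewrite in_cons hi orbT.
Qed.

(* s_b^* s_l for l in L^{<=n} and d(b) <= n: by KP3 applied to the prefix
   of l in L^{<=d(b)}, this is 0 or s_x with s(x) = s(l). *)
Lemma ss_s_le (b l : kpath L) (n : 'I_k -> nat) : in_le n l -> rng l = rng b ->
  deg_le (deg b) n ->
  mul (ss b) (s l) = 0 \/ exists x, src x = src l /\ mul (ss b) (s l) = s x.
Proof.
move=> hl hr hd.
have [l1 [hl1 [c [hc ec]]]] := truncate LC hl hd.
case: (pselect (nonzero_deg (deg b))) => [nz|/deg0P d0]; last first.
  by right; exists l; rewrite (deg0_id d0) ss_idp -hr KPps.
rewrite -ec -KPss // nua_mulA (KP3 HF nz (in_le_self b) hl1).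
case: eqP => [eb|]; last by left; rewrite nua_mul0l.
right; exists c; split; first by rewrite src_comp.
by rewrite eb hc KPps.
Qed.

Lemma ss_le_s (g l : kpath L) (n : 'I_k -> nat) : in_le n l -> rng l = rng g ->
  deg_le (deg g) n ->
  mul (ss l) (s g) = 0 \/ exists y, src y = src l /\ mul (ss l) (s g) = ss y.
Proof.
move=> hl hr hd.
have [l1 [hl1 [c [hc ec]]]] := truncate LC hl hd.
case: (pselect (nonzero_deg (deg g))) => [nz|/deg0P d0]; last first.
  by right; exists l; rewrite (deg0_id d0) s_idp -hr KPstp.
rewrite -ec -KPstst // -nua_mulA (KP3 HF nz hl1 (in_le_self g)).
case: eqP => [eb|]; last by left; rewrite nua_mul0r.
right; exists c; split; first by rewrite src_comp.
by rewrite hc KPstp.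
Qed.

(* The key step: s_b^* s_g is in the span.  Insert p_{r(b)} as a sum over
   r(b) L^{<=n} with n > d(b), d(g) (KP4) and apply the two lemmas above. *)
Lemma span_ss_s (b g : kpath L) : kp_span (mul (ss b) (s g)).
Proof.
case: (eqVneq (rng b) (rng g)) => [e|ne]; last by rewrite KPsts0 //; apply: span0.
pose n := fun i => (maxn (deg b i) (deg g i)).+1.
have [es [ues hes]] := enum_le (rng b) n RF.
have nz : nonzero_deg n by exists (Ordinal k_gt0).
have := KPstp HF b; rewrite (KP4 HF nz ues hes) nua_mul_sumr => <-.
rewrite nua_mul_suml; apply: span_sum => l /hes [hr hl].
rewrite [mul (ss b) (mul _ _)]nua_mulA -nua_mulA.
have hdb : deg_le (deg b) n by move=> i; rewrite /n ltnW // ltnS leq_maxl.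
have hdg : deg_le (deg g) n by move=> i; rewrite /n ltnW // ltnS leq_maxr.
have [->|[x [hx ->]]] := ss_s_le hl hr hdb; first by rewrite nua_mul0l; apply: span0.
have [->|[y [hy ->]]] := ss_le_s hl (etrans hr e) hdg; first by rewrite nua_mul0r; apply: span0.
by apply: span_gen; rewrite hx hy.
Qed.

Lemma span_sandwich (a b : kpath L) X : kp_span X -> kp_span (mul (s a) (mul X (ss b))).
Proof.
elim => [|a1 b1 _ IHa _ IHb|r a1 _ IH|a1 b1 hab].
- by rewrite nua_mul0l nua_mul0r; apply: span0.
- by rewrite nua_mulDl nua_mulDr; apply: spanD.
- by rewrite nua_scalerAl nua_scalerAr; apply: spanZ.
rewrite -nua_mulA nua_mulA.
case: (eqVneq (src a) (rng a1)) => [h1|h1]; last by rewrite KPss0 // nua_mul0l; apply: span0.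
case: (eqVneq (src b) (rng b1)) => [h2|h2]; last by rewrite KPstst0 // nua_mul0r; apply: span0.
by rewrite KPss // KPstst //; apply: span_gen; rewrite !src_comp.
Qed.

Lemma span_mul x y : kp_span x -> kp_span y -> kp_span (mul x y).
Proof.
move=> hx; elim: hx y => [|a1 a2 _ IH1 _ IH2|r a _ IH|al be hab] b hb.
- by rewrite nua_mul0l; apply: span0.
- by rewrite nua_mulDl; apply: spanD; [apply: IH1|apply: IH2].
- by rewrite nua_scalerAl; apply: spanZ; apply: IH.
elim: hb => [|b1 b2 _ IH1 _ IH2|r b' _ IH|ga de hgd].
- by rewrite nua_mul0r; apply: span0.
- by rewrite nua_mulDr; apply: spanD.
- by rewrite nua_scalerAr; apply: spanZ.
rewrite -nua_mulA [mul (ss be) _]nua_mulA.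
exact: span_sandwich (span_ss_s be ga).
Qed.

Lemma span_p v : kp_span (p v).
Proof. by have [es [hr ->]] := p_expand v; apply: span_sum => l _; apply: span_gen. Qed.

Lemma span_s l : kp_span (s l).
Proof.
rewrite -KPsp //; have [es [hr ->]] := p_expand (src l).
rewrite nua_mul_sumr; apply: span_sum => m /hr hm.
by rewrite nua_mulA KPss // ?hm //; apply: span_gen; rewrite src_comp ?hm.
Qed.

Lemma span_ss l : kp_span (ss l).
Proof.
rewrite -KPpst //; have [es [hr ->]] := p_expand (src l).
rewrite nua_mul_suml; apply: span_sum => m /hr hm.
by rewrite -nua_mulA KPstst // ?hm //; apply: span_gen; rewrite src_comp ?hm.
Qed.

End Span.

Lemma kp_span_all (k : nat) (L : kgraph k) (R : comNzRingType) (A : nualg R)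
    (F : kpdata L A) :
  is_KP_algebra F ->
  row_finite L -> locally_convex L -> (0 < k)%N -> forall a, kp_span F a.
Proof.
move=> HKP RF LC k_gt0; have HF := proj1 HKP.
apply: (KP_algebra_ind HKP); [exact: span0|exact: spanD|exact: spanZ|
  exact: span_mul|exact: span_p|exact: span_s|exact: span_ss].
Qed.

Section CornerSpan.
Variables (k : nat) (L : kgraph k) (R : comNzRingType) (A : nualg R) (F : kpdata L A).
Local Notation mul := (@nua_mul R A).
Local Notation p := (kp_p F).

Inductive corner_span : A -> Prop :=
 | corner0 : corner_span 0
 | cornerD a b : corner_span a -> corner_span b -> corner_span (a + b)
 | cornerZ (r : R) a : corner_span a -> corner_span (r *: a)
 | corner_gen u x : corner_span (mul (mul (p u) x) (p u)).

Hypothesis HF : is_KP_family F.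

Lemma corner_mul x y : corner_span x -> corner_span y -> corner_span (mul x y).
Proof.
move=> hx; elim: hx y => [|a1 a2 _ IH1 _ IH2|r a _ IH|u x0] y hy.
- by rewrite nua_mul0l; apply: corner0.
- by rewrite nua_mulDl; apply: cornerD; [apply: IH1|apply: IH2].
- by rewrite nua_scalerAl; apply: cornerZ; apply: IH.
elim: hy => [|b1 b2 _ IH1 _ IH2|r b _ IH|u' y0].
- by rewrite nua_mul0r; apply: corner0.
- by rewrite nua_mulDr; apply: cornerD.
- by rewrite nua_scalerAr; apply: cornerZ.
case: (eqVneq u u') => [<-|nu].
  have -> : mul (mul (mul (p u) x0) (p u)) (mul (mul (p u) y0) (p u)) =
            mul (mul (p u) (mul (mul x0 (p u)) y0)) (p u).
    by rewrite !nua_mulA -[mul (mul (mul (p u) x0) (p u)) (p u)]nua_mulA KPpp.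
  exact: corner_gen.
rewrite !nua_mulA -[mul (mul (mul (p u) x0) (p u)) (p u')]nua_mulA KPpq //.
by rewrite nua_mul0r !nua_mul0l; apply: corner0.
Qed.

Lemma corner_p u : corner_span (p u).
Proof. by rewrite -{1}(KPpp HF u) -{1}(KPpp HF u); apply: corner_gen. Qed.

Hypothesis no_edge : forall l : kpath L, src l = rng l.

Lemma corner_s l : corner_span (kp_s F l).
Proof. by rewrite -(KPsp HF l) -{1}(KPps HF l) no_edge; apply: corner_gen. Qed.

Lemma corner_ss l : corner_span (kp_ss F l).
Proof. by rewrite -(KPstp HF l) -{1}(KPpst HF l) no_edge; apply: corner_gen. Qed.

End CornerSpan.

Lemma corner_span_all (k : nat) (L : kgraph k) (R : comNzRingType) (A : nualg R)
    (F : kpdata L A) :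
  is_KP_algebra F -> (forall l : kpath L, src l = rng l) -> forall a, corner_span F a.
Proof.
move=> HKP no_edge; have HF := proj1 HKP.
apply: (KP_algebra_ind HKP); [exact: corner0|exact: cornerD|exact: cornerZ|
  exact: corner_mul|exact: corner_p|exact: corner_s|exact: corner_ss].
Qed.

Definition linked (k : nat) (L : kgraph k) (v w : vert L) : Prop :=
  exists a b : kpath L, [/\ rng a = v, rng b = w & src a = src b].

Lemma linked_refl (k : nat) (L : kgraph k) (v : vert L) : linked v v.
Proof. by exists (idp v), (idp v); rewrite rng_idp. Qed.

(* Corner vanishing: p_v a p_w = 0 for every a when v and w are not linked.
   It suffices to check it on a spanning set, where it is immediate. *)
Lemma corner_vanish (k : nat) (L : kgraph k) (R : comNzRingType) (A : nualg R)
    (F : kpdata L A) (v w : vert L) :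
  is_KP_algebra F -> row_finite L -> locally_convex L -> ~ linked v w ->
  forall a, nua_mul (nua_mul (kp_p F v) a) (kp_p F w) = 0.
Proof.
move=> HKP RF LC nvw; have HF := proj1 HKP.
pose Z a := nua_mul (nua_mul (kp_p F v) a) (kp_p F w) = 0.
have Z0 : Z 0 by rewrite /Z nua_mul0r nua_mul0l.
have ZD a b : Z a -> Z b -> Z (a + b).
  by rewrite /Z nua_mulDr nua_mulDl => -> ->; rewrite addr0.
have ZZ r a : Z a -> Z (r *: a).
  by rewrite /Z nua_scalerAr nua_scalerAl => ->; rewrite scaler0.
move=> x; case: (posnP k) => [k0|k_gt0].
  have no_edge (l : kpath L) : src l = rng l.
    by apply: deg0_rs => -[i hi]; exfalso; move: hi; rewrite k0.
  elim: (corner_span_all HKP no_edge x) => [|a1 a2 _ h1 _ h2|r a1 _ h|u y];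
    [exact: Z0|exact: ZD h1 h2|exact: ZZ h|].
  case: (eqVneq v u) => [evu|nvu]; last by rewrite /Z !nua_mulA KPpq // !nua_mul0l.
  case: (eqVneq u w) => [euw|nuw].
    by case: nvw; rewrite evu -euw; apply: linked_refl.
  by rewrite /Z -!nua_mulA (KPpq HF nuw) !nua_mul0r.
elim: (kp_span_all HKP RF LC k_gt0 x) => [|a1 a2 _ h1 _ h2|r a1 _ h|a b hab];
  [exact: Z0|exact: ZD h1 h2|exact: ZZ h|].
case: (eqVneq v (rng a)) => [ev|nv]; last by rewrite /Z !nua_mulA KPps0 // !nua_mul0l.
case: (eqVneq (rng b) w) => [ew|nw]; last by rewrite /Z -!nua_mulA KPstp0 // !nua_mul0r.
by case: nvw; exists a, b.
Qed.

(* A boundary path is an increasing sequence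
   x_0 <= x_1 <= ... of paths with x_N in L^{<=(N,...,N)}; it avoids H when
   no s(x_N) is in H.  Such sequences model the infinite paths of L \ H;
   concatenation x = l y of a path l with a boundary path y is expressed by
   the relation [bcat l y x]. *)
Section BoundaryPaths.
Variables (k : nat) (L : kgraph k) (H : vert L -> Prop).
Hypothesis hH : hereditary H.
Hypothesis LC : locally_convex L.

Definition ndeg (N : nat) : 'I_k -> nat := fun _ => N.

Definition avoiding_chain (x : nat -> kpath L) : Prop :=
  [/\ forall N, in_le (ndeg N) (x N), forall N, kprefix (x N) (x N.+1) &
      forall N, ~ H (src (x N))].

Record bpath := BPath { bp :> nat -> kpath L; bpP : avoiding_chain bp }.

Lemma bp_ext (x y : bpath) : (forall N, x N = y N) -> x = y.
Proof.
case: x => x hx; case: y => y hy /= e.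
have exy : x = y by apply: funext.
by subst y; rewrite (Prop_irrelevance hx hy).
Qed.

Lemma bp_in (x : bpath) N : in_le (ndeg N) (x N).
Proof. by case: x => x /= [h _ _]. Qed.

Lemma bp_nH (x : bpath) N : ~ H (src (x N)).
Proof. by case: x => x /= [_ _ h]. Qed.

Lemma bp_pre (x : bpath) N M : (N <= M)%N -> kprefix (x N) (x M).
Proof.
case: x => x /= [_ h _]; elim: M => [|M IH].
  by rewrite leqn0 => /eqP ->; apply: kprefix_refl.
rewrite leq_eqVlt => /orP [/eqP ->|]; first exact: kprefix_refl.
by rewrite ltnS => /IH hh; apply: kprefix_trans hh (h M).
Qed.

Definition brng (x : bpath) := rng (x 0%N).

Lemma bp_rng (x : bpath) N : rng (x N) = brng x.
Proof. by rewrite /brng; apply: kprefix_rng; apply: bp_pre. Qed.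

Lemma kprefix_nH (a b : kpath L) : kprefix a b -> ~ H (src b) -> ~ H (src a).
Proof.
move=> [c [hc <-]] hb ha; apply: hb.
by rewrite src_comp //; apply: hH; rewrite -hc.
Qed.

Lemma brng_nH (x : bpath) : ~ H (brng x).
Proof.
have h0 : forall i, deg (x 0%N) i = 0%N.
  by move=> i; apply/eqP; rewrite -leqn0; exact: (proj1 (bp_in x 0) i).
by rewrite /brng -(deg0_rs h0); apply: bp_nH.
Qed.

Lemma bpath_of_chain (z : nat -> kpath L) (m : nat -> 'I_k -> nat) :
  (forall N, in_le (m N) (z N)) -> (forall N, deg_le (ndeg N) (m N)) ->
  (forall N, kprefix (z N) (z N.+1)) -> (forall N, ~ H (src (z N))) ->
  exists x : bpath, forall N, kprefix (x N) (z N).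
Proof.
move=> zin zdeg zpre znH.
have tr N : exists t, in_le (ndeg N) t /\ kprefix t (z N) := truncate LC (zin N) (zdeg N).
pose x N := projT1 (cid (tr N)).
have xP N : in_le (ndeg N) (x N) /\ kprefix (x N) (z N) by rewrite /x; case: cid.
have hx : avoiding_chain x.
  split => N; first by case: (xP N).
  - have [t [ht pt]] := truncate LC (proj1 (xP N.+1)) (fun i => leqnSn N).
    suff -> : x N = t by [].
    apply: (kprefix_uniq (proj1 (xP N)) ht (kprefix_trans (proj2 (xP N)) (zpre N))).
    exact: kprefix_trans pt (proj2 (xP N.+1)).
  - exact: kprefix_nH (proj2 (xP N)) (znH N).
by exists (BPath hx) => N; case: (xP N).
Qed.

(* x = l y: the N-th stage of x is a prefix of l y_N *)
Definition bcat (l : kpath L) (y x : bpath) :=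
  src l = brng y /\ forall N, kprefix (x N) (kcomp l (y N)).

Lemma bcat_rng l y x : bcat l y x -> brng x = rng l.
Proof. by move=> [h1 h2]; rewrite /brng -(kprefix_rng (h2 0%N)) rng_comp // bp_rng. Qed.

Lemma bcat_fun l y x x' : bcat l y x -> bcat l y x' -> x = x'.
Proof.
move=> [h1 h2] [_ h2']; apply: bp_ext => N.
exact: kprefix_uniq (bp_in x N) (bp_in x' N) (h2 N) (h2' N).
Qed.

Lemma bcat_ex l y : src l = brng y -> exists x, bcat l y x.
Proof.
move=> hl.
have hs N : src l = rng (y N) by rewrite hl bp_rng.
have [x hx] := @bpath_of_chain (fun N => kcomp l (y N)) (fun N i => deg l i + N)%N
  (fun N => in_le_comp (in_le_self l) (bp_in y N) (hs N)) (fun N i => leq_addl _ _)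
  (fun N => kprefix_compl (hs N) (hs N.+1) (bp_pre y (leqnSn N)))
  (fun N => ltac:(rewrite src_comp //; exact: bp_nH)).
by exists x.
Qed.

Definition dsum (l : kpath L) := (\sum_i deg l i)%N.

Lemma deg_le_dsum l i : (deg l i <= dsum l)%N.
Proof. by rewrite /dsum (bigD1 i) //= leq_addr. Qed.

Lemma bcat_prefix l y x N : bcat l y x -> kprefix (kcomp l (y N)) (x (N + dsum l)%N).
Proof.
move=> [h1 h2].
have hs : src l = rng (y N) by rewrite h1 bp_rng.
have hs' : src l = rng (y (N + dsum l)%N) by rewrite h1 bp_rng.
have p1 := h2 (N + dsum l)%N.
have p2 : kprefix (kcomp l (y N)) (kcomp l (y (N + dsum l)%N)).
  by apply: kprefix_compl => //; apply: bp_pre; rewrite leq_addr.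
apply: (kprefix_of_deg p2 p1) => i.
rewrite (kprefix_deg_formula (bp_in x _) p1) /ndeg.
have := deg_le_dsum l i; have := proj1 (bp_in y N) i; rewrite /ndeg.
have := kprefix_deg p2 i.
rewrite !deg_comp //; lia.
Qed.

Lemma bcat_inj l y y' x : bcat l y x -> bcat l y' x -> y = y'.
Proof.
move=> c c'; apply: bp_ext => N.
have [a [ha ea]] := bcat_prefix N c.
have [b [hb eb]] := bcat_prefix N c'.
case: c => [h1 _]; case: c' => [h1' _].
have hs : src l = rng (y N) by rewrite h1 bp_rng.
have hs' : src l = rng (y' N) by rewrite h1' bp_rng.
move: ha hb; rewrite !src_comp // => ha hb.
have e : kcomp l (kcomp (y N) a) = kcomp l (kcomp (y' N) b) by rewrite !kcompA // ea eb.
have e2 := kcomp_cancel (etrans hs (esym (rng_comp ha))) (etrans hs' (esym (rng_comp hb))) e.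
apply: (kprefix_uniq (bp_in y N) (bp_in y' N) (kprefix_comp ha)).
by rewrite e2; apply: kprefix_comp.
Qed.

Lemma bcat_shift l (x : bpath) M : kprefix l (x M) -> exists y, bcat l y x.
Proof.
move=> hp.
have hz N : exists z, src l = rng z /\ kcomp l z = x (N + M)%N.
  by have [z [hz ez]] := kprefix_trans hp (bp_pre x (leq_addl N M)); exists z.
pose z N := projT1 (cid (hz N)).
have zP N : src l = rng (z N) /\ kcomp l (z N) = x (N + M)%N by rewrite /z; case: cid.
have dl i : (deg l i <= M)%N.
  by apply: leq_trans (kprefix_deg hp i) _; exact: (proj1 (bp_in x M) i).
have [y hy] := @bpath_of_chain z (fun N i => N + M - deg l i)%N
  (fun N => ltac:(apply: in_le_rem (proj1 (zP N)) _;
    [rewrite (proj2 (zP N)); apply: bp_in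
    |by move=> i; apply: leq_trans (dl i) (leq_addl _ _)]))
  (fun N i => ltac:(rewrite /ndeg; have := dl i; lia))
  (fun N => ltac:(apply: (kprefix_cancel (proj1 (zP N)) (proj1 (zP N.+1)));
    by rewrite (proj2 (zP N)) (proj2 (zP N.+1)); apply: bp_pre; rewrite addSn))
  (fun N => ltac:(have := @bp_nH x (N + M)%N;
    by rewrite -(proj2 (zP N)) src_comp //; exact: (proj1 (zP N)))).
exists y; split; first by rewrite /brng -(kprefix_rng (hy 0%N)); exact: (proj1 (zP 0%N)).
move=> N.
have hsy : src l = rng (y N) by rewrite (proj1 (zP N)) (kprefix_rng (hy N)).
have p1 : kprefix (x N) (x (N + M)%N) by apply: bp_pre; rewrite leq_addr.
have p2 : kprefix (kcomp l (y N)) (x (N + M)%N).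
  by rewrite -(proj2 (zP N)); apply: kprefix_compl (proj1 (zP N)) (hy N).
apply: (kprefix_of_deg p1 p2) => i.
rewrite (kprefix_deg_formula (bp_in x N) p1) deg_comp //.
rewrite (kprefix_deg_formula (bp_in y N) (hy N)) /ndeg.
rewrite -(proj2 (zP N)) deg_comp //; first by lia.
exact: (proj1 (zP N)).
Qed.

Lemma bcat_comp l m z x : src l = rng m ->
  bcat (kcomp l m) z x <-> exists y, bcat l y x /\ bcat m z y.
Proof.
move=> hlm; split; last first.
  move=> [y [[h1 h2] [h3 h4]]].
  have ry : brng y = rng m by apply: (bcat_rng (conj h3 h4)).
  split; first by rewrite src_comp.
  move=> N.
  have hsz : src m = rng (z N) by rewrite h3 bp_rng.
  have hsy : src l = rng (y N) by rewrite bp_rng ry.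
  apply: kprefix_trans (h2 N) _.
  by rewrite -kcompA //; apply: kprefix_compl => //; rewrite rng_comp.
move=> [h1 h2]; rewrite src_comp // in h1.
have [y hy] := bcat_ex h1.
exists y; split => //.
have ry := bcat_rng hy.
split; first by rewrite ry.
move=> N.
have hsz : src m = rng (z N) by rewrite h1 bp_rng.
have hsy : src l = rng (y N) by rewrite bp_rng ry.
have p1 := h2 N.
have p2 : kprefix (kcomp l (y N)) (kcomp (kcomp l m) (z N)).
  rewrite -kcompA //; apply: kprefix_compl => //; first by rewrite rng_comp.
  exact: (proj2 hy N).
apply: (kprefix_of_deg p1 p2) => i.
rewrite (kprefix_deg_formula (bp_in x N) p1).
rewrite (deg_comp hsy) (kprefix_deg_formula (bp_in y N) (proj2 hy N)) /ndeg.
have hs2 : src (kcomp l m) = rng (z N) by rewrite src_comp.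
rewrite (deg_comp hs2) (deg_comp hlm) (deg_comp hsz); lia.
Qed.

Lemma bcat_uniq_le (n : 'I_k -> nat) l l' y y' x : in_le n l -> in_le n l' ->
  bcat l y x -> bcat l' y' x -> l = l'.
Proof.
move=> hl hl' c c'.
have pre (a : kpath L) b : bcat a b x -> kprefix a (x (dsum a)).
  move=> cab; have := bcat_prefix 0%N cab; rewrite add0n.
  by apply: kprefix_trans; apply: kprefix_comp; case: cab => h _; rewrite h bp_rng.
have p := kprefix_trans (pre _ _ c) (bp_pre x (leq_addr (dsum l') (dsum l))).
have p' := kprefix_trans (pre _ _ c') (bp_pre x (leq_addl (dsum l) (dsum l'))).
exact: kprefix_uniq hl hl' p p'.
Qed.

Lemma bcat_exists_le (n : 'I_k -> nat) (x : bpath) :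
  exists l, [/\ in_le n l, rng l = brng x & exists y, bcat l y x].
Proof.
have hd : deg_le n (ndeg (\sum_i n i)%N).
  by move=> i; rewrite /ndeg (bigD1 i) //= leq_addr.
have [l [hl pl]] := truncate LC (bp_in x (\sum_i n i)%N) hd.
exists l; split => //; first by rewrite -(kprefix_rng pl) bp_rng.
exact: bcat_shift pl.
Qed.

End BoundaryPaths.

Section BoundaryPathExistence.
Variables (k : nat) (L : kgraph k) (H : vert L -> Prop).
Hypothesis hH : hereditary H.
Hypothesis sH : saturated H.
Hypothesis LC : locally_convex L.

(* A vertex outside H has paths of every size n that avoid H: by
   saturation, some edge (or vertex) of every colour leads out of H;
   induction on |n|, adding one unit of degree at a time. *)
Lemma avoiding_path (a : vert L) : ~ H a ->
  forall n, exists mu, [/\ rng mu = a, in_le n mu & ~ H (src mu)].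
Proof.
move=> ha n.
move: {2}(\sum_i n i)%N (leqnn (\sum_i n i)%N) => S.
elim: S n => [|S IH] n hS.
  exists (idp a); rewrite rng_idp src_idp; split => //.
  apply: in_le_id => [[i [hi _]]].
  by move: hS; rewrite (bigD1 i) //=; move: hi; case: (n i).
case: (pselect (exists i, 0 < n i)%N) => [[i hi]|hno]; last first.
  exists (idp a); rewrite rng_idp src_idp; split => //.
  by apply: in_le_id => [[i [hi _]]]; apply: hno; exists i.
pose n' j := (n j - e_ i j)%N.
have en j : n j = (n' j + e_ i j)%N by rewrite /n' subnK // (e_le hi j).
have hS' : (\sum_j n' j <= S)%N.
  have : (\sum_j n j = \sum_j n' j + \sum_j e_ i j)%N.
    by rewrite -big_split; apply: eq_bigr => j _; apply: en.
  by rewrite sum_e; move: hS; lia.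
have [mu [hr hl hn]] := IH n' hS'.
have : ~ (forall l, rng l = src mu -> in_le (e_ i) l -> H (src l)).
  by move=> hall; apply: hn; apply: sH; exists i.
move=> /existsNP [l /not_implyP [hrl /not_implyP [hle hnl]]].
exists (kcomp mu l); rewrite rng_comp // src_comp //; split => //.
by apply: in_le_ext (in_le_comp hl hle (esym hrl)) => j; rewrite en.
Qed.

Lemma bpath_ex u : ~ H u -> exists x : bpath H, brng x = u.
Proof.
move=> hu.
pose step (a : kpath L) : kpath L :=
  match pselect (~ H (src a)) with
  | left h => projT1 (cid (avoiding_path h (@ndeg k 1)))
  | right _ => idp (src a) end.
have stepP a : ~ H (src a) ->
    [/\ rng (step a) = src a, in_le (@ndeg k 1) (step a) & ~ H (src (step a))].
  by move=> h; rewrite /step; case: pselect => // h'; case: cid.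
pose z N := iter N (fun a => kcomp a (step a)) (idp u).
have zP N : [/\ in_le (@ndeg k N) (z N), ~ H (src (z N)) & rng (z N) = u].
  elim: N => [|N [h1 h2 h3]].
    rewrite /z /= src_idp rng_idp; split => //.
    by apply: in_le_id => [[i [hi _]]].
  have [s1 s2 s3] := stepP _ h2.
  rewrite /z iterS -/(z N); split; [|by rewrite src_comp|by rewrite rng_comp].
  by apply: in_le_ext (in_le_comp h1 s2 (esym s1)) => i; rewrite /ndeg addn1.
have [x hx] := @bpath_of_chain k L H hH LC z (@ndeg k)
  (fun N => ltac:(by case: (zP N))) (fun N i => leqnn N)
  (fun N => ltac:(rewrite /z iterS -/(z N); apply: kprefix_comp;
     by case: (zP N) => _ h2 _; case: (stepP _ h2)))
  (fun N => ltac:(by case: (zP N))).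
by exists x; rewrite /brng -(kprefix_rng (hx 0%N)); case: (zP 0%N).
Qed.

End BoundaryPathExistence.

Section Operators.
Variables (R : comNzRingType) (X : Type).

Definition op := (X -> R^o) -> (X -> R^o).

Definition op_linear (f : op) : Prop :=
  (forall a b, f (a + b) = f a + f b) /\ (forall (r : R) a, f (r *: a) = r *: f a).

Lemma fnD (a b : X -> R^o) x : (a + b) x = a x + b x. Proof. by []. Qed.
Lemma fnZ (r : R) (a : X -> R^o) x : (r *: a) x = r *: a x. Proof. by []. Qed.
Lemma opD (f g : op) a : (f + g) a = f a + g a. Proof. by []. Qed.
Lemma opZ (r : R) (f : op) a : (r *: f) a = r *: f a. Proof. by []. Qed.

Lemma op_linear0 : op_linear 0.
Proof. by split => [a b|r a]; rewrite ?addr0 ?scaler0. Qed.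

Lemma op_linearD f g : op_linear f -> op_linear g -> op_linear (f + g).
Proof.
move=> [f1 f2] [g1 g2]; split => [a b|r a]; rewrite !opD.
  by rewrite f1 g1 addrACA.
by rewrite f2 g2 scalerDr.
Qed.

Lemma op_linearZ (r : R) f : op_linear f -> op_linear (r *: f).
Proof.
move=> [f1 f2]; split => [a b|s a]; rewrite !opZ; first by rewrite f1 scalerDr.
by rewrite f2 !scalerA mulrC.
Qed.

Lemma op_linear_comp (f g : op) : op_linear f -> op_linear g -> op_linear (f \o g).
Proof. by move=> [f1 f2] [g1 g2]; split => [a b|r a] /=; rewrite ?g1 ?f1 ?g2 ?f2. Qed.

Definition linear_ops : submod_pred op :=
  SubmodPred op_linear0 op_linearD op_linearZ.

Local Notation opsub := (submod linear_ops).

Definition opval (f : opsub) : op := submod_val f.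

Lemma opalg_ext (f g : opsub) : (forall phi x, opval f phi x = opval g phi x) -> f = g.
Proof. by move=> h; apply: submod_val_inj; apply: funext => phi; apply: funext. Qed.

Definition opmul (f g : opsub) : opsub :=
  submod_mk (S := linear_ops) (op_linear_comp (submod_S f) (submod_S g)).

Lemma opmulE f g : opval (opmul f g) = opval f \o opval g.
Proof. by []. Qed.

Lemma opvalD f g : opval (f + g) = opval f + opval g.
Proof. exact: submod_valD. Qed.

Lemma opvalZ (r : R) f : opval (r *: f) = r *: opval f.
Proof. exact: submod_valZ. Qed.

Lemma opmulA f g h : opmul f (opmul g h) = opmul (opmul f g) h.
Proof. by apply: opalg_ext => phi x; rewrite !opmulE. Qed.
Lemma opmulDl f g h : opmul (f + g) h = opmul f h + opmul g h.
Proof. by apply: opalg_ext => phi x; rewrite !(opmulE, opvalD) /= !opD !fnD. Qed.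
Lemma opmulDr f g h : opmul f (g + h) = opmul f g + opmul f h.
Proof.
have [fD _] : op_linear (opval f) := submod_S f.
by apply: opalg_ext => phi x; rewrite !(opmulE, opvalD) /= opD fD fnD.
Qed.
Lemma opmulZl (r : R) f g : opmul (r *: f) g = r *: opmul f g.
Proof. by apply: opalg_ext => phi x; rewrite !(opmulE, opvalZ) /= !opZ !fnZ. Qed.
Lemma opmulZr (r : R) f g : opmul f (r *: g) = r *: opmul f g.
Proof.
have [_ fZ] : op_linear (opval f) := submod_S f.
by apply: opalg_ext => phi x; rewrite !(opmulE, opvalZ) /= opZ fZ fnZ.
Qed.

Definition opalg : nualg R := NUAlg opmulA opmulDl opmulDr opmulZl opmulZr.

Lemma opval_mul (f g : opalg) : opval (nua_mul f g) = opval f \o opval g.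
Proof. by []. Qed.

Lemma opval_sum (I : Type) (r : seq I) (F : I -> opalg) phi x :
  opval (\sum_(i <- r) F i) phi x = \sum_(i <- r) opval (F i) phi x.
Proof. by rewrite /opval submod_val_sum !fct_sumE. Qed.


Definition pullback (f : X -> option X) : op :=
  fun phi x => if f x is Some y then phi y else 0.

Lemma pullback_linear f : op_linear (pullback f).
Proof.
split => [a b|r a]; apply: funext => x; rewrite /pullback ?fnD ?fnZ;
  by case: (f x) => //; rewrite ?addr0 ?scaler0.
Qed.

Definition pull (f : X -> option X) : opalg :=
  submod_mk (S := linear_ops) (pullback_linear f).

Lemma pullE f phi x : opval (pull f) phi x = if f x is Some y then phi y else 0.
Proof. by []. Qed.

Lemma pull_mul f g : nua_mul (pull f) (pull g) = pull (fun x => obind g (f x)).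
Proof. by apply: opalg_ext => phi x; rewrite opval_mul /= /pullback; case: (f x). Qed.

Lemma pull_ext f g : (forall x, f x = g x) -> pull f = pull g.
Proof. by move=> e; apply: opalg_ext => phi x; rewrite !pullE e. Qed.

Lemma pull_none : pull (fun _ => None) = 0.
Proof. by apply: opalg_ext. Qed.

End Operators.

Arguments pull {R X} f.
Arguments opval {R X} f.
Arguments pull_mul {R X} f g.
Arguments pull_ext {R X f g}.
Arguments pull_none {R X}.

Section Representation.
Variables (k : nat) (L : kgraph k) (R : comNzRingType) (H : vert L -> Prop).
Hypothesis hH : hereditary H.
Hypothesis LC : locally_convex L.
Local Notation X := (bpath H).

Definition at_vertex (v : vert L) (x : X) : option X :=
  if brng x == v then Some x else None.

Definition strip (l : kpath L) (x : X) : option X :=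
  match pselect (exists y, bcat l y x) with
  | left h => Some (projT1 (cid h)) | right _ => None end.

Definition prepend (l : kpath L) (y : X) : option X :=
  match pselect (exists x, bcat l y x) with
  | left h => Some (projT1 (cid h)) | right _ => None end.

Lemma strip_some l y x : bcat l y x -> strip l x = Some y.
Proof.
move=> c; rewrite /strip; case: pselect => [h|h]; last by case: h; exists y.
by case: cid => y' hy' /=; rewrite (bcat_inj hy' c).
Qed.

Lemma strip_none l x : ~ (exists y, bcat l y x) -> strip l x = None.
Proof. by rewrite /strip; case: pselect. Qed.

Lemma prepend_some l y x : bcat l y x -> prepend l y = Some x.
Proof.
move=> c; rewrite /prepend; case: pselect => [h|h]; last by case: h; exists x.
by case: cid => x' hx' /=; rewrite (bcat_fun hx' c).
Qed.

Lemma prepend_none l y : ~ (exists x, bcat l y x) -> prepend l y = None.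
Proof. by rewrite /prepend; case: pselect. Qed.

Lemma prepend_vertex l y : prepend l y = None <-> brng y <> src l.
Proof.
split=> [hn e|ne]; last by apply: prepend_none => -[x [e _]]; apply: ne.
by have [x hx] := bcat_ex hH LC (esym e); rewrite (prepend_some hx) in hn.
Qed.

Definition rep_family : kpdata L (opalg R X) :=
  KPData (fun v => pull (at_vertex v)) (fun l => pull (strip l))
    (fun l => pull (prepend l)).

(* The Kumjian-Pask relations, as identities between partial maps
   (the pullback of a Kleisli composite being the product of pullbacks). *)
Lemma at_vertex_idem v x : obind (at_vertex v) (at_vertex v x) = at_vertex v x.
Proof. by rewrite /at_vertex; case: eqP => //= ->; rewrite eqxx. Qed.

Lemma at_vertex_orth v w x : v != w -> obind (at_vertex w) (at_vertex v x) = None.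
Proof. by move=> /negbTE vw; rewrite /at_vertex; case: eqP => //= ->; rewrite vw. Qed.

Lemma strip_comp l m x : src l = rng m ->
  obind (strip m) (strip l x) = strip (kcomp l m) x.
Proof.
move=> lm; case: (pselect (exists z, bcat (kcomp l m) z x)) => [[z hz]|nz].
  have [y [hy1 hy2]] := proj1 (bcat_comp hH LC z x lm) hz.
  by rewrite (strip_some hy1) /= (strip_some hy2) (strip_some hz).
rewrite (strip_none nz).
case: (pselect (exists y, bcat l y x)) => [[y hy]|ny]; last by rewrite strip_none.
rewrite (strip_some hy) /= strip_none // => -[z hz]; apply: nz; exists z.
by apply/(bcat_comp hH LC z x lm); exists y.
Qed.

Lemma prepend_comp l m x : src l = rng m ->
  obind (prepend l) (prepend m x) = prepend (kcomp l m) x.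
Proof.
move=> lm; case: (pselect (exists y, bcat (kcomp l m) x y)) => [[y hy]|ny].
  have [z [hz1 hz2]] := proj1 (bcat_comp hH LC x y lm) hy.
  by rewrite (prepend_some hz2) /= (prepend_some hz1) (prepend_some hy).
rewrite (prepend_none ny).
case: (pselect (exists z, bcat m x z)) => [[z hz]|nz]; last by rewrite prepend_none.
rewrite (prepend_some hz) /= prepend_none // => -[y hy]; apply: ny; exists y.
by apply/(bcat_comp hH LC x y lm); exists z.
Qed.

Lemma strip_at_rng l x : obind (strip l) (at_vertex (rng l) x) = strip l x.
Proof.
rewrite /at_vertex; case: eqP => //= ne.
by rewrite strip_none // => -[y hy]; apply: ne; apply: bcat_rng hy.
Qed.

Lemma at_src_strip l x : obind (at_vertex (src l)) (strip l x) = strip l x.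
Proof.
case: (pselect (exists y, bcat l y x)) => [[y hy]|ny]; last by rewrite strip_none.
by rewrite (strip_some hy) /= /at_vertex; case: hy => -> _; rewrite eqxx.
Qed.

Lemma prepend_at_src l x : obind (prepend l) (at_vertex (src l) x) = prepend l x.
Proof. by rewrite /at_vertex; case: eqP => //= ne; apply/esym/prepend_vertex. Qed.

Lemma at_rng_prepend l x : obind (at_vertex (rng l)) (prepend l x) = prepend l x.
Proof.
case: (pselect (exists y, bcat l x y)) => [[y hy]|ny]; last by rewrite prepend_none.
by rewrite (prepend_some hy) /= /at_vertex (bcat_rng hy) eqxx.
Qed.

Lemma strip_prepend_le (n : 'I_k -> nat) l m y : in_le n l -> in_le n m ->
  obind (strip m) (prepend l y) = if l == m then at_vertex (src l) y else None.
Proof.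
move=> hl hm; case: eqP => [<-|ne].
  case: (pselect (exists x, bcat l y x)) => [[x hx]|nx].
    by rewrite (prepend_some hx) /= (strip_some hx) /at_vertex; case: hx => -> _; rewrite eqxx.
  rewrite prepend_none // /at_vertex; case: eqP => // e; case: nx.
  by apply: (bcat_ex hH LC); rewrite e.
case: (pselect (exists x, bcat l y x)) => [[x hx]|nx]; last by rewrite prepend_none.
rewrite (prepend_some hx) /= strip_none // => -[z hz]; apply: ne.
exact: bcat_uniq_le hl hm hx hz.
Qed.

Lemma prepend_strip l x :
  obind (prepend l) (strip l x) = if `[< exists y, bcat l y x >] then Some x else None.
Proof.
case: (pselect (exists y, bcat l y x)) => [[y hy]|ny].
  rewrite (strip_some hy) /= (prepend_some hy).
  by case: asboolP => // -[]; exists y.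
by rewrite strip_none //; case: asboolP.
Qed.

(* KP4: a boundary path with range v begins with exactly one l in v L^{<=n} *)
Lemma rep_KP4 v (n : 'I_k -> nat) (es : seq (kpath L)) :
  uniq es -> (forall l, l \in es <-> (rng l = v /\ in_le n l)) ->
  pull (at_vertex v) =
  \sum_(l <- es) pull (fun x => obind (prepend l) (strip l x)) :> opalg R X.
Proof.
move=> ues hes; apply: opalg_ext => phi x.
rewrite opval_sum pullE /at_vertex.
under eq_bigr => l _ do rewrite pullE prepend_strip.
case: eqP => [ev|nev].
  have [l0 [hl0 rl0 [y0 hy0]]] := bcat_exists_le hH LC n x.
  have l0es : l0 \in es by apply/hes; rewrite rl0.
  rewrite (bigD1_seq l0) //=.
  case: asboolP => [_|h]; last by case: h; exists y0.
  rewrite big_seq_cond big1 ?addr0 // => l /andP [les nl].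
  case: asboolP => // -[y hy]; case/negP: nl; apply/eqP.
  exact: bcat_uniq_le (proj2 (proj1 (hes l) les)) hl0 hy hy0.
rewrite big_seq big1 // => l les.
case: asboolP => // -[y hy]; case: nev.
by rewrite (bcat_rng hy); case: (proj1 (hes l) les).
Qed.

Lemma rep_KP : is_KP_family rep_family.
Proof.
split; [|split; [|split; [|split; [|split]]]].
- by move=> v; rewrite pull_mul; apply: pull_ext => x; apply: at_vertex_idem.
- move=> v w vw; rewrite pull_mul -pull_none; apply: pull_ext => x.
  exact: at_vertex_orth.
- by move=> l m lm; rewrite !pull_mul; split; apply: pull_ext => x;
    [apply: strip_comp | apply: prepend_comp].
- move=> l; rewrite !pull_mul; split; [|split; [|split]]; apply: pull_ext => x.
  + exact: strip_at_rng.
  + exact: at_src_strip.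
  + exact: prepend_at_src.
  + exact: at_rng_prepend.
- move=> n l m nz hl hm; rewrite pull_mul.
  rewrite (pull_ext (fun y => strip_prepend_le y hl hm)).
  by case: (l == m); rewrite ?pull_none.
- move=> v n es nz ues hes /=; rewrite (rep_KP4 ues hes).
  by apply: eq_bigr => l _; apply/esym/pull_mul.
Qed.

Lemma rep_p_H w : H w -> kp_p rep_family w = 0.
Proof.
move=> hw; rewrite -pull_none; apply: pull_ext => x; rewrite /at_vertex.
by case: eqP => // e; case: (brng_nH (x := x)); rewrite e.
Qed.

Lemma rep_p_nH u : saturated H -> ~ H u -> kp_p rep_family u <> 0.
Proof.
move=> sH hu e.
have [x hx] := bpath_ex hH sH LC hu.
have : opval (kp_p rep_family u) (fun _ => 1) x = opval (0 : opalg R X) (fun _ => 1) x.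
  by rewrite e.
by rewrite pullE /at_vertex hx eqxx => /eqP; rewrite oner_eq0.
Qed.

End Representation.

Section Ideals.
Variables (R : comNzRingType) (A : nualg R).
Local Notation mul := (@nua_mul R A).

Lemma hom_kernel_ideal (B : nualg R) (f : A -> B) :
  nua_hom f -> is_ideal (fun a => f a = 0).
Proof.
move=> [fD fZ fM].
have f0 : f 0 = 0 by apply: (addrI (f 0)); rewrite -fD !addr0.
split => // [a b ha hb|r a ha|a x hx]; first by rewrite fD ha hb addr0.
  by rewrite fZ ha scaler0.
by rewrite !fM hx nua_mul0r nua_mul0l.
Qed.

Lemma gen_ideal_is_ideal (S : A -> Prop) : is_ideal (gen_ideal S).
Proof.
split.
- by move=> I [].
- by move=> a b ha hb I hI hS; have [_ hD _ _] := hI; apply: hD; [apply: ha|apply: hb].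
- by move=> r a ha I hI hS; have [_ _ hZ _] := hI; apply: hZ; apply: ha.
- move=> a x hx; split => I hI hS; have [_ _ _ hM] := hI.
    + exact: (proj1 (hM a x (hx I hI hS))).
    + exact: (proj2 (hM a x (hx I hI hS))).
Qed.

(* An idempotent e annihilates the ideal generated by S as soon as
   e a y = y a e = 0 for all y in S and all a: the elements x with
   e a x = x a e = 0 for all a form an ideal, and e x = e e x = 0. *)
Lemma idempotent_perp (S : A -> Prop) (e : A) : mul e e = e ->
  (forall y, S y -> forall a, mul (mul e a) y = 0 /\ mul (mul y a) e = 0) ->
  perp (gen_ideal S) e.
Proof.
move=> ee hS x hx.
pose I x := forall a, mul (mul e a) x = 0 /\ mul (mul x a) e = 0.
have hI : is_ideal I.
  split.
  - by move=> a; rewrite !(nua_mul0l, nua_mul0r).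
  - move=> a b ha hb c; have [h1 h2] := ha c; have [h3 h4] := hb c.
    by rewrite nua_mulDr !nua_mulDl h1 h2 h3 h4 addr0.
  - move=> r a ha c; have [h1 h2] := ha c.
    by rewrite nua_scalerAr !nua_scalerAl h1 h2 scaler0.
  - move=> a y hy; split => c; split.
    + have -> : mul (mul e c) (mul a y) = mul (mul e (mul c a)) y by rewrite !nua_mulA.
      exact: (proj1 (hy _)).
    + have -> : mul (mul (mul a y) c) e = mul a (mul (mul y c) e) by rewrite !nua_mulA.
      by rewrite (proj2 (hy c)) nua_mul0r.
    + have -> : mul (mul e c) (mul y a) = mul (mul (mul e c) y) a by rewrite !nua_mulA.
      by rewrite (proj1 (hy c)) nua_mul0l.
    + have -> : mul (mul (mul y a) c) e = mul (mul y (mul a c)) e by rewrite !nua_mulA.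
      exact: (proj2 (hy _)).
have Ix : I x by apply: hx.
by split; rewrite -{1}ee ?nua_mulA; [exact: (proj1 (Ix e))|exact: (proj2 (Ix e))].
Qed.
End Ideals.

Section VertexIdeal.
Variables (k : nat) (L : kgraph k) (R : comNzRingType) (A : nualg R) (F : kpdata L A).
Hypothesis HKP : is_KP_algebra F.
Hypothesis LC : locally_convex L.
Local Notation p := (kp_p F).

(* H(J) = H: the boundary path representation for H kills J but no p_u
   with u outside H. *)
Lemma vertex_in_ideal (H : vert L -> Prop) u : hereditary H -> saturated H ->
  ideal_of_vertices F H (p u) <-> H u.
Proof.
move=> hH sH; split => [hJ|hu I _ hS]; last by apply: hS; exists u.
case: (pselect (H u)) => // hu.
have [[f [hf [fp _]]] _] := proj2 HKP _ _ (rep_KP R hH LC).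
case: (rep_p_nH (R := R) hH LC sH hu); rewrite -fp.
apply: hJ (hom_kernel_ideal hf) _ => _ [w [hw ->]].
by rewrite fp; apply: rep_p_H.
Qed.

Lemma empty_saturated : saturated (fun _ : vert L => False).
Proof.
move=> v [i hall].
case: (pselect (has_path_deg v (e_ i))) => [[l [hl dl]]|nh].
  by apply: (hall l hl); split => j; rewrite dl // ltnn.
apply: (hall (idp v)); first by rewrite rng_idp.
apply: in_le_id => -[j [hj he]]; apply: nh.
by case: (eqVneq j i) => [<- //|ji]; move: hj; rewrite e_ij.
Qed.

(* in KP_R(L) no vertex projection vanishes (the case H = {} above) *)
Lemma kp_p_neq0 u : p u <> 0.
Proof.
move=> pu0; suff : ideal_of_vertices F (fun _ => False) (p u).
  by move/(vertex_in_ideal (H := fun _ => False) u (fun _ h => h) empty_saturated).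
by rewrite pu0 => I [].
Qed.

(* If p_v annihilates an ideal I, no path from v ends in H(I): such a path
   would give s_l in I, hence s_l = p_v s_l = 0 and p_{s(l)} = s_l^* s_l = 0. *)
Lemma perp_no_path (I : A -> Prop) (l : kpath L) :
  is_ideal I -> perp I (p (rng l)) -> ~ I (p (src l)).
Proof.
have HF := proj1 HKP.
move=> hI hperp Il.
case: (pselect (nonzero_deg (deg l))) => [nz|/deg0P d0].
  have Is : I (kp_s F l).
    by have [_ _ _ h] := hI; have := proj1 (h (kp_s F l) _ Il); rewrite KPsp.
  have s0 : kp_s F l = 0 by rewrite -(KPps HF l); case: (hperp _ Is).
  apply: (kp_p_neq0 (u := src l)).
  by have := KP3 HF nz (in_le_self l) (in_le_self l); rewrite eqxx s0 nua_mul0r.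
apply: (kp_p_neq0 (u := src l)).
by rewrite -(KPpp HF) {1}(deg0_rs d0); case: (hperp _ Il).
Qed.

End VertexIdeal.

Theorem mainTheorem6 (k : nat) (L : kgraph k) (R : comNzRingType)
    (A : nualg R) (F : kpdata L A) (H : vert L -> Prop) :
  row_finite L -> locally_convex L ->
  hereditary H -> saturated H ->
  is_KP_algebra F ->
  let J := ideal_of_vertices F H in
  (forall v : vert L,
     HofI F (perp J) v <-> ~ (exists l : kpath L, rng l = v /\ H (src l))) /\
  (forall v : vert L,
     ~ (exists l : kpath L, rng l = v /\ H (src l)) <-> ~ HbarofI F J v).
Proof.
move=> RF LC hH sH HKP J.
have HJ u : J (kp_p F u) <-> H u := vertex_in_ideal HKP LC u hH sH.
split => v; last first.
  (* \overline{H}(J) consists of the ranges of paths into H(J) = H *)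
  by split => nv [l [hl hs]]; apply: nv; exists l; split => //; apply/HJ.
split => [hperp [l [hl hs]] | nv].
  apply: (perp_no_path HKP LC (I := J) (l := l) (gen_ideal_is_ideal _)).
    by rewrite hl.
  exact/HJ.
(* p_v annihilates the generators p_w: v and w are not linked, since a
   common source would lie in H by heredity *)
apply: idempotent_perp (KPpp (proj1 HKP) v) _ => _ [w [hw ->]] a.
split; apply: (corner_vanish HKP RF LC); move=> [a' [b' [ha hb hab]]]; apply: nv.
- by exists a'; split => //; rewrite hab; apply: hH; rewrite hb.
- by exists b'; split => //; rewrite -hab; apply: hH; rewrite ha.
Qed.
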